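(* Fix integers $h_1,h_2$ with $p\nmid h_1h_2$ and let $e_1,e_2\in\{-1,1\}$. Assume $k_1,k_2>0$ and $k_1+k_2<d$. Let $\alpha_1\in\mathbb{F}_{q^{k_1}}$, $\alpha_2\in\mathbb{F}_{q^{k_2}}$ have monic minimal polynomials $g_1,g_2$ over $\mathbb{F}_q$ of degrees $u_1,u_2$. Then \[\left\langle\psi(e_1h_1\mathrm{tr}_{k_1}f(\alpha_1)+e_2h_2\mathrm{tr}_{k_2}f(\alpha_2))\right\rangle=1\] if either ($g_1=g_2$, $p\mid\frac{e_1h_1k_1+e_2h_2k_2}{u_1}$ and $p\nmid\frac{k_1k_2}{u_1u_2}$) or ($p$ divides both $\frac{k_1}{u_1}$ and $\frac{k_2}{u_2}$); otherwise the average equals $0$.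
   Context: $p$ odd prime, $q$ a power of $p$, $d$ a positive integer not divisible by $p$. $\mathrm{tr}_n:\mathbb{F}_{q^n}\to\mathbb{F}_p$ is the absolute trace; $\psi$ a fixed nontrivial additive character of $\mathbb{F}_p$. $\mathcal{F}_d'=\{a_dX^d+\dots+a_0\in\mathbb{F}_q[X]:a_d\ne0,\ a_{pk}=0\text{ for }1\le k\le\lfloor d/p\rfloor\}$ and $\langle\phi(f)\rangle=|\mathcal{F}_d'|^{-1}\sum_{f\in\mathcal{F}_d'}\phi(f)$. *)

From HB Require Import structures.
From mathcomp Require Import all_boot all_order all_algebra all_field.
Set Implicit Arguments. Unset Strict Implicit. Unset Printing Implicit Defensive.
Import Order.TTheory GRing.Theory Num.Theory.
Local Open Scope ring_scope.

(* Everything lives inside a finite field L of characteristic p that contains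
   F_q, F_{q^k1}, F_{q^k2}; q = p^m.  F_{q^k} is realised as the subfield
   {x in L | x^(q^k) = x}. *)

Definition polyOverFq (L : fieldType) (q : nat) (g : {poly L}) : bool :=
  all (fun c : L => c ^+ q == c) g.

Definition is_minpoly_Fq (L : fieldType) (q : nat) (a : L) (g : {poly L}) : Prop :=
  [/\ g \is monic, polyOverFq q g, root g a &
      forall h : {poly L}, h != 0 -> polyOverFq q h -> root h a ->
        (size g <= size h)%N].

Definition abs_trace (L : nzRingType) (p m n : nat) (x : L) : L :=
  \sum_(i < m * n) x ^+ (p ^ i).

(* F_d' : coefficient vectors (a_0,...,a_d) over F_q with a_d != 0 and
   a_{pk} = 0 for 1 <= k <= d/p (i.e. for every index i <= d with p | i, i > 0) *)
Definition Fdprime (L : finFieldType) (p q d : nat) : {set {ffun 'I_d.+1 -> L}} :=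
  [set a : {ffun 'I_d.+1 -> L} |
     [&& [forall i, a i ^+ q == a i],
         a ord_max != 0 &
         [forall i : 'I_d.+1, ((0 < i)%N && (p %| i)%N) ==> (a i == 0)]]].

Definition polyOf (L : nzRingType) (d : nat) (a : {ffun 'I_d.+1 -> L}) : {poly L} :=
  \poly_(i < d.+1) a (inord i).

Definition avgFd (L : finFieldType) (p q d : nat)
    (phi : {ffun 'I_d.+1 -> L} -> algC) : algC :=
  (#|@Fdprime L p q d|%:R)^-1 * \sum_(a in @Fdprime L p q d) phi a.

(* Transitivity of traces rewrites the argument of psi, for a in F_d', as
   Tr_{F_q/F_p} (\sum_j a_j c_j) with c_j = e1 h1 Tr_{k1}(alpha1^j) + e2 h2 Tr_{k2}(alpha2^j).
   Summing the Frobenius iterates orbit by orbit, c_j = \sum_x W(x) x^j is the j-th power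
   sum of the weight W equal to (k_i/u_i) e_i h_i on the orbit of alpha_i (the roots of g_i).
   If c_j <> 0 for some j < d that is free in F_d' (j = 0 or p does not divide j),
   translating a_j by a suitable x in F_q multiplies every summand by psi(t) <> 1, so the
   average is 0; if all c_j vanish, every summand is 1.  As W takes values in F_p,
   c_{jp} = c_j^p, and W is supported on at most k1 + k2 < d points, so by a Vandermonde
   argument some free c_j is nonzero unless W = 0, which unfolds to the stated condition. *)

From HB Require Import structures.
From mathcomp Require Import all_boot all_order all_algebra all_field.
Set Implicit Arguments. Unset Strict Implicit. Unset Printing Implicit Defensive.
Import Order.TTheory GRing.Theory Num.Theory.
Local Open Scope ring_scope.

Lemma sum_ord_cyclic_shift (V : nmodType) n (g : nat -> V) : g n = g 0%N ->
  \sum_(i < n) g i.+1 = \sum_(i < n) g i.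
Proof.
case: n => [|n] g_n; first by rewrite !big_ord0.
by rewrite big_ord_recr big_ord_recl /= g_n addrC.
Qed.

Section IterOrbit.
Variables (T : finType) (f : T -> T).
Hypothesis f_inj : injective f.

Lemma iter_mod_order n x : iter n f x = iter (n %% order f x)%N f x.
Proof.
rewrite {1}(divn_eq n (order f x)) addnC iterD; congr (iter _ f _).
by elim: (n %/ order f x)%N => //= t IH; rewrite mulSn iterD IH iter_order.
Qed.

Lemma order_dvdn n x : iter n f x = x -> (order f x %| n)%N.
Proof.
rewrite iter_mod_order /dvdn => fix_x.
have := findex_iter (ltn_pmod n (order_gt0 f x)).
by rewrite fix_x findex0 => /esym/eqP.
Qed.

Lemma sum_traject (V : nmodType) (F : T -> V) n x :
  \sum_(y <- traject f x n) F y = \sum_(i < n) F (iter i f x).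
Proof.
elim: n => [|n IH]; first by rewrite big_nil big_ord0.
by rewrite trajectSr -cats1 big_cat big_seq1 IH big_ord_recr.
Qed.

Lemma sum_iter_orbit (V : nmodType) (F : T -> V) n x : iter n f x = x ->
  \sum_(i < n) F (iter i f x) = (\sum_(y | fconnect f x y) F y) *+ (n %/ order f x).
Proof.
move=> /order_dvdn/dvdnP[t ->]; rewrite mulnK ?order_gt0 //; elim: t => [|t IH].
  by rewrite mul0n big_ord0 mulr0n.
rewrite mulSn big_split_ord /= mulrS; congr (_ + _).
  rewrite -sum_traject big_uniq ?orbit_uniq //.
  by apply: eq_bigl => y; rewrite fconnect_orbit.
by rewrite -IH; apply: eq_bigr => i _; rewrite addnC iterD iter_order.
Qed.

End IterOrbit.

Section IteratedFrobenius.
Variables (R : comNzRingType) (p : nat) (chRp : p \in [pchar R]).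

Definition frobn (n : nat) : R -> R := iter n (pFrobenius_aut chRp).

Lemma frobnE n x : frobn n x = x ^+ (p ^ n).
Proof.
elim: n => [|n IH]; first by rewrite expr1.
by rewrite /frobn iterS -/(frobn n) IH pFrobenius_autE -exprM -expnSr.
Qed.

Fact frobn_is_zmod n : zmod_morphism (frobn n).
Proof. by elim: n => // n IH x y; rewrite /frobn !iterS -!/(frobn n) IH rmorphB. Qed.

Fact frobn_is_monoid n : monoid_morphism (frobn n).
Proof.
split; first by elim: n => // n IH; rewrite /frobn iterS -/(frobn n) IH rmorph1.
by elim: n => // n IH x y; rewrite /frobn !iterS -!/(frobn n) IH rmorphM.
Qed.

HB.instance Definition _ n := GRing.isZmodMorphism.Build R R (frobn n) (frobn_is_zmod n).
HB.instance Definition _ n := GRing.isMonoidMorphism.Build R R (frobn n) (frobn_is_monoid n).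

Lemma frobnD n1 n2 x : frobn (n1 + n2) x = frobn n1 (frobn n2 x).
Proof. exact: iterD. Qed.

Lemma iter_frobn k n x : iter k (frobn n) x = frobn (n * k) x.
Proof. by rewrite /frobn mulnC iterM. Qed.

End IteratedFrobenius.

Section FrobeniusOrbits.
Variables (L : finFieldType) (p : nat) (chLp : p \in [pchar L]) (m : nat).
Local Notation q := (p ^ m)%N.
Local Notation fq := (frobn chLp m).

Lemma fq_inj : injective fq. Proof. exact: fmorph_inj. Qed.

Lemma iter_fq n x : iter n fq x = x ^+ (q ^ n).
Proof. by rewrite iter_frobn frobnE expnM. Qed.

Definition qorbit (a : L) : {set L} := [set x | fconnect fq a x].

Lemma card_qorbit a : #|qorbit a| = order fq a.
Proof. exact: cardsE. Qed.

Lemma qorbit_id a : a \in qorbit a.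
Proof. by rewrite inE connect0. Qed.

Lemma mem_qorbit_fq a x : (fq x \in qorbit a) = (x \in qorbit a).
Proof. by rewrite !inE -(same_fconnect1_r fq_inj). Qed.

Lemma qorbit_eq a b : (qorbit a == qorbit b) = fconnect fq a b.
Proof.
apply/eqP/idP => [eq_ab | ab]; first by have := qorbit_id b; rewrite -eq_ab inE.
by apply/setP => x; rewrite !inE (same_connect (fconnect_sym fq_inj) ab).
Qed.

Lemma qorbit_disjoint a b : qorbit a != qorbit b -> [disjoint qorbit a & qorbit b].
Proof.
rewrite qorbit_eq -setI_eq0 => ab; apply/eqP/setP => x; rewrite !inE.
apply/negbTE/andP => -[ax bx]; case/negP: ab.
by rewrite (connect_trans ax) // (fconnect_sym fq_inj).
Qed.

Lemma sum_qorbit (V : nmodType) (F : L -> V) k a : a ^+ (q ^ k) = a ->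
  \sum_(i < k) F (a ^+ (q ^ i)) = (\sum_(x in qorbit a) F x) *+ (k %/ order fq a).
Proof.
move=> fix_a; rewrite (eq_bigl (fconnect fq a)) => [|x]; last by rewrite inE.
rewrite -(sum_iter_orbit fq_inj) ?iter_fq //.
by apply: eq_bigr => i _; rewrite iter_fq.
Qed.

Lemma order_qorbit_dvdn k a : a ^+ (q ^ k) = a -> (order fq a %| k)%N.
Proof. by rewrite -iter_fq; apply: (order_dvdn fq_inj). Qed.

Lemma polyOverFqP g : reflect (map_poly fq g = g) (polyOverFq q g).
Proof.
apply: (iffP allP) => [g_Fq | fix_g c /(nthP 0)[i _ <-]].
  apply/polyP => i; rewrite coef_map /=.
  have [lt_i | le_i] := ltnP i (size g); last by rewrite nth_default ?rmorph0.
  by rewrite frobnE; apply/eqP/g_Fq/mem_nth.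
by apply/eqP; rewrite -frobnE -coef_map fix_g.
Qed.

Lemma root_fq g x : polyOverFq q g -> root g x -> root g (fq x).
Proof.
move=> /polyOverFqP fix_g; rewrite /root -{2}fix_g horner_map /=.
by move=> /eqP ->; rewrite rmorph0.
Qed.

Definition orbit_poly (a : L) : {poly L} := \prod_(x in qorbit a) ('X - x%:P).

Lemma orbit_polyE a : orbit_poly a = \prod_(x <- enum (qorbit a)) ('X - x%:P).
Proof. by rewrite big_enum. Qed.

Lemma root_orbit_poly a x : root (orbit_poly a) x = (x \in qorbit a).
Proof. by rewrite orbit_polyE root_prod_XsubC mem_enum. Qed.

Lemma size_orbit_poly a : size (orbit_poly a) = (order fq a).+1.
Proof. by rewrite orbit_polyE size_prod_XsubC -cardE card_qorbit. Qed.

Lemma orbit_poly_over a : polyOverFq q (orbit_poly a).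
Proof.
apply/polyOverFqP; rewrite rmorph_prod.
under eq_bigr => x _ do rewrite /= map_polyXsubC.
by rewrite [RHS](reindex_inj fq_inj); apply: eq_bigl => x; rewrite mem_qorbit_fq.
Qed.

Lemma minpoly_orbit_poly a g : is_minpoly_Fq q a g -> g = orbit_poly a.
Proof.
case=> g_monic g_Fq g_a g_min.
have g_orbit : all (root g) (enum (qorbit a)).
  apply/allP => x; rewrite mem_enum inE fconnect_orbit => /trajectP[i _ ->].
  by elim: i => //= i IH; apply: root_fq.
have size_g : size g = (size (enum (qorbit a))).+1.
  apply/anti_leq/andP; split; last exact: max_poly_roots (monic_neq0 g_monic) g_orbit (enum_uniq _).
  rewrite -cardE card_qorbit -size_orbit_poly g_min ?orbit_poly_over //.
    by rewrite monic_neq0 // monic_prod_XsubC.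
  by rewrite root_orbit_poly qorbit_id.
rewrite (all_roots_prod_XsubC size_g) ?uniq_rootsE ?enum_uniq //.
by rewrite (monicP g_monic) scale1r orbit_polyE.
Qed.

Lemma orbit_poly_eq a b : (orbit_poly a == orbit_poly b) = (qorbit a == qorbit b).
Proof.
apply/eqP/eqP => eq_ab; last by rewrite /orbit_poly eq_ab.
by apply/setP => x; rewrite -!root_orbit_poly eq_ab.
Qed.

End FrobeniusOrbits.

Section Traces.
Variables (L : finFieldType) (p : nat) (chLp : p \in [pchar L]) (m : nat).
Local Notation q := (p ^ m)%N.

Definition trace_qp (x : L) : L := \sum_(i < m) frobn chLp i x.

Definition rel_trace (k : nat) (y : L) : L := \sum_(l < k) frobn chLp (m * l) y.

Fact trace_qp_is_zmod : zmod_morphism trace_qp.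
Proof. by move=> x y; rewrite /trace_qp -sumrB; apply: eq_bigr => i _; rewrite rmorphB. Qed.

HB.instance Definition _ := GRing.isZmodMorphism.Build L L trace_qp trace_qp_is_zmod.

Fact rel_trace_is_zmod k : zmod_morphism (rel_trace k).
Proof. by move=> x y; rewrite /rel_trace -sumrB; apply: eq_bigr => i _; rewrite rmorphB. Qed.

HB.instance Definition _ k :=
  GRing.isZmodMorphism.Build L L (rel_trace k) (rel_trace_is_zmod k).

Lemma abs_trace_rel_trace k x : abs_trace p m k x = trace_qp (rel_trace k x).
Proof.
elim: k => [|k IH]; first by rewrite /abs_trace /rel_trace muln0 !big_ord0 raddf0.
rewrite /abs_trace mulnSr big_split_ord /= -/(abs_trace p m k x) IH.
rewrite /rel_trace big_ord_recr /= -/(rel_trace k x) raddfD; congr (_ + _).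
by apply: eq_bigr => i _; rewrite -frobnD frobnE addnC.
Qed.

Lemma frobn_Fq n c : c ^+ q = c -> frobn chLp (m * n) c = c.
Proof. by move=> c_Fq; rewrite -iter_frobn iter_fix // frobnE. Qed.

Lemma rel_traceZ k c y : c ^+ q = c -> rel_trace k (c * y) = c * rel_trace k y.
Proof.
move=> c_Fq; rewrite /rel_trace mulr_sumr; apply: eq_bigr => l _.
by rewrite rmorphM /= frobn_Fq.
Qed.

Lemma rel_trace_Fq k y : y ^+ (q ^ k) = y -> rel_trace k y ^+ q = rel_trace k y.
Proof.
move=> y_Fqk; rewrite -frobnE /rel_trace rmorph_sum /=.
under eq_bigr do rewrite -frobnD -mulnS.
rewrite (sum_ord_cyclic_shift (g := fun l => frobn chLp (m * l) y)) //.
by rewrite muln0 frobnE expnM y_Fqk.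
Qed.

Lemma trace_qp_Fp x : x ^+ q = x -> trace_qp x ^+ p = trace_qp x.
Proof.
move=> x_Fq; have -> : trace_qp x ^+ p = frobn chLp 1 (trace_qp x) by rewrite frobnE.
rewrite /trace_qp rmorph_sum.
under eq_bigr => i _ do rewrite -[_ (frobn chLp i x)]/(frobn chLp i.+1 x).
by rewrite (sum_ord_cyclic_shift (g := fun i => frobn chLp i x)) // frobnE x_Fq.
Qed.

Lemma trace_qpZ c x : c ^+ p = c -> trace_qp (c * x) = c * trace_qp x.
Proof.
move=> c_Fp; rewrite /trace_qp mulr_sumr; apply: eq_bigr => i _.
by rewrite rmorphM /= [frobn _ _ c]iter_fix // pFrobenius_autE.
Qed.

Lemma XqsubX_dvdp n : ('X^q - 'X : {poly L}) %| 'X^(q ^ n) - 'X.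
Proof.
have chPp : p \in [pchar {poly L}] by rewrite pchar_poly.
elim: n => [|n IH]; first by rewrite expn0 expr1 subrr dvdp0.
have -> : ('X^(q ^ n.+1) - 'X : {poly L}) = frobn chPp m ('X^(q ^ n) - 'X) + ('X^q - 'X).
  by rewrite rmorphB /= !frobnE -exprM -expnSr addrA subrK.
by rewrite dvdp_add // frobnE dvdp_exp // expn_gt0 prime_gt0 ?(pcharf_prime chLp).
Qed.

Lemma leq_q_card_Fq n : (0 < m)%N -> #|L| = (q ^ n)%N ->
  (q <= #|[set x : L | x ^+ q == x]|)%N.
Proof.
(* X^q - X divides X^#|L| - X = \prod_x (X - x), hence has q distinct roots in L. *)
move=> m_gt0 cardL; have q_gt1 : (1 < q)%N.
  by rewrite -{1}(expn0 p) ltn_exp2l ?prime_gt1 ?(pcharf_prime chLp).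
have := XqsubX_dvdp n; rewrite -cardL finField_genPoly => /dvdp_prod_XsubC[s XqX_eq].
set r := mask s (index_enum L) in XqX_eq.
have size_r : size r = q.
  have := eqp_size XqX_eq; rewrite size_prod_XsubC size_polyDl ?size_polyXn.
    by case.
  by rewrite size_polyN size_polyX ltnS.
rewrite -{1}size_r cardE uniq_leq_size ?mask_uniq ?index_enum_uniq // => x x_r.
have : root ('X^q - 'X) x by rewrite (eqp_root XqX_eq) root_prod_XsubC.
by rewrite mem_enum inE /root !hornerE subr_eq0.
Qed.

Lemma exists_trace_qp_neq0 n : (0 < m)%N -> #|L| = (q ^ n)%N ->
  exists2 y : L, y ^+ q = y & trace_qp y != 0.
Proof.
move=> m_gt0 cardL; have p_gt1 := prime_gt1 (pcharf_prime chLp).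
pose T : {poly L} := \sum_(i < m) 'X^(p ^ i).
have T_eval y : T.[y] = trace_qp y.
  by rewrite horner_sum; apply: eq_bigr => i _; rewrite hornerXn frobnE.
have T_neq0 : T != 0.
  apply/eqP => /(congr1 (coefp 1)); rewrite /= coef0 coef_sum (bigD1 (Ordinal m_gt0)) //=.
  rewrite big1 => [|i]; last first.
    rewrite -val_eqE /= -lt0n coefXn => i_gt0.
    by rewrite ltn_eqF // -{1}(expn0 p) ltn_exp2l.
  by rewrite addr0 coefXn expn0 eqxx => /eqP; rewrite oner_eq0.
have size_T : (size T <= (p ^ m.-1).+1)%N.
  apply: leq_trans (size_sum _ _ _) _; apply/bigmax_leqP => i _.
  by rewrite size_polyXn ltnS leq_pexp2l ?(ltnW p_gt1) // -ltnS prednK.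
(* T has degree p^(m-1) < q, so it cannot vanish on the q elements of F_q. *)
have : ~~ ([set y : L | y ^+ q == y] \subset [set y | root T y]).
  apply/negP => /subset_leq_card; rewrite leqNgt; apply/negP/negPn.
  apply: leq_trans (leq_q_card_Fq m_gt0 cardL).
  have := max_poly_roots T_neq0 _ (enum_uniq (pred_of_set [set y | root T y])).
  rewrite -cardE => /(_ _)/leq_trans; apply.
    by apply/allP => y; rewrite mem_enum inE.
  by apply: leq_trans size_T _; rewrite ltn_exp2l // prednK.
by case/subsetPn => y; rewrite !inE /root T_eval => /eqP y_Fq tr_y; exists y.
Qed.

Lemma trace_qp_onto n c t : (0 < m)%N -> #|L| = (q ^ n)%N ->
  c ^+ q = c -> c != 0 -> t ^+ p = t -> exists2 x, x ^+ q = x & trace_qp (x * c) = t.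
Proof.
move=> m_gt0 cardL c_Fq c_neq0 t_Fp.
have [y y_Fq tr_y] := exists_trace_qp_neq0 m_gt0 cardL.
pose s := t / trace_qp y.
have s_Fp : s ^+ p = s by rewrite expr_div_n t_Fp trace_qp_Fp.
have s_Fq : s ^+ q = s by rewrite -frobnE [frobn _ _ s]iter_fix // pFrobenius_autE.
exists (s * y / c); first by rewrite expr_div_n exprMn s_Fq y_Fq c_Fq.
by rewrite divfK // trace_qpZ // divfK.
Qed.

End Traces.

Section PowerSums.
Variables (L : finFieldType) (p : nat) (chLp : p \in [pchar L]).

Definition psum (W : L -> L) (j : nat) : L := \sum_x W x * x ^+ j.

Lemma psum0 W : psum W 0 = \sum_x W x.
Proof. by apply: eq_bigr => x _; rewrite mulr1. Qed.

Lemma psum_mulp W j : (forall x, W x ^+ p = W x) -> psum W (j * p) = psum W j ^+ p.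
Proof.
move=> W_Fp; rewrite -(pFrobenius_autE chLp) rmorph_sum; apply: eq_bigr => x _.
by rewrite rmorphM /= !pFrobenius_autE W_Fp exprM.
Qed.

Lemma psum_coprime_neq0 W j : (forall x, W x ^+ p = W x) -> (0 < j)%N -> psum W j != 0 ->
  exists i, [/\ (0 < i <= j)%N, ~~ (p %| i)%N & psum W i != 0].
Proof.
move=> W_Fp; elim/ltn_ind: j => j IH j_gt0 psum_j.
have [/dvdnP[i def_j] | p_j] := boolP (p %| j)%N; last by exists j; rewrite j_gt0 leqnn.
have p_gt1 := prime_gt1 (pcharf_prime chLp).
have /andP[i_gt0 _] : (0 < i)%N && (0 < p)%N by rewrite -muln_gt0 -def_j.
have i_lt_j : (i < j)%N by rewrite def_j ltn_Pmulr.
have psum_i : psum W i != 0.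
  apply: contraNneq psum_j => psum_i.
  by rewrite def_j psum_mulp // psum_i -(pFrobenius_autE chLp) rmorph0.
have [i' [/andP[i'_gt0 le_i'i] p_i' psum_i']] := IH i i_lt_j i_gt0 psum_i.
by exists i'; rewrite i'_gt0 (leq_trans le_i'i (ltnW i_lt_j)).
Qed.

Lemma psum_vanishing (W : L -> L) n : (#|[set x | W x != 0%R]| <= n)%N ->
  (forall j, (0 < j <= n)%N -> psum W j = 0) -> forall x, x != 0 -> W x = 0.
Proof.
move=> card_W psum_W x0 x0_neq0; apply/eqP/negPn/negP => W_x0.
set S := [set x | W x != 0] in card_W.
have x0_S : x0 \in S by rewrite inE.
(* Q kills S :\ x0 and 0, and the sum of W x * Q.[x] only involves psum W 1, ..., psum W n. *)
pose Q : {poly L} := \prod_(y in S :\ x0) ('X - y%:P) * 'X.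
have size_Q : (size Q <= n.+1)%N.
  rewrite size_mulX ?monic_neq0 ?monic_prod_XsubC // -big_enum size_prod_XsubC -cardE.
  by move: card_W; rewrite (cardsD1 x0 S) x0_S add1n ltnS.
have sum_WQ : \sum_x W x * Q.[x] = W x0 * Q.[x0].
  rewrite (bigD1 x0) //= big1 ?addr0 // => x x_neq0.
  have [x_S | x_S] := boolP (x \in S); last first.
    by move: x_S; rewrite inE negbK => /eqP->; rewrite mul0r.
  have : root (\prod_(y in S :\ x0) ('X - y%:P)) x.
    by rewrite -big_enum root_prod_XsubC mem_enum in_setD1 x_neq0.
  by rewrite hornerMX => /eqP ->; rewrite !mul0r mulr0.
have : \sum_x W x * Q.[x] = 0.
  under eq_bigr do rewrite horner_coef mulr_sumr.
  rewrite exchange_big /= big1 // => i _.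
  under eq_bigr do rewrite mulrCA.
  rewrite -mulr_sumr.
  have [->|i_gt0] := posnP i; first by rewrite coefMX eqxx mul0r.
  by rewrite -/(psum W i) psum_W ?mulr0 // i_gt0 -ltnS (leq_trans (ltn_ord i) size_Q).
apply/eqP; rewrite sum_WQ mulf_neq0 // hornerMX mulf_neq0 // horner_prod.
by apply/prodf_neq0 => y; rewrite !inE hornerXsubC subr_eq0 eq_sym => /andP[].
Qed.

Lemma exists_psum_neq0 (W : L -> L) n : (forall x, W x ^+ p = W x) ->
  (#|[set x | W x != 0%R]| <= n)%N -> ~~ [forall x, W x == 0] ->
  exists j, [/\ (j <= n)%N, (j == 0 :> nat) || ~~ (p %| j)%N & psum W j != 0].
Proof.
move=> W_Fp card_W /forallPn[x0 W_x0].
have [/existsP[j /andP[j_gt0 psum_j]] | no_j] :=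
  boolP [exists j : 'I_n.+1, (0 < j)%N && (psum W j != 0)].
  have [i [/andP[_ le_ij] p_i psum_i]] := psum_coprime_neq0 W_Fp j_gt0 psum_j.
  by exists i; rewrite p_i orbT psum_i (leq_trans le_ij) // -ltnS.
have W_off0 : forall x, x != 0 -> W x = 0.
  apply: (psum_vanishing card_W) => j /andP[j_gt0 le_jn].
  move: no_j; rewrite negb_exists => /forallP/(_ (@Ordinal n.+1 j le_jn)).
  by rewrite j_gt0 negbK => /eqP.
exists 0%N; rewrite leq0n eqxx psum0 (bigD1 0) //= big1 ?addr0 => [|x /W_off0 //].
by case: (eqVneq x0 0) W_x0 => [<- // | /W_off0 ->]; rewrite eqxx.
Qed.

End PowerSums.

Lemma eq_avgFd (L : finFieldType) (p q d : nat) (phi phi' : {ffun 'I_d.+1 -> L} -> algC) :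
  {in Fdprime L p q d, phi =1 phi'} -> avgFd p q phi = avgFd p q phi'.
Proof. by move=> eq_phi; rewrite /avgFd (eq_bigr _ eq_phi). Qed.

Section CharacterSums.
Variables (L : finFieldType) (p m d : nat) (chLp : p \in [pchar L]).
Local Notation q := (p ^ m)%N.
Local Notation Fd := (@Fdprime L p q d).

Lemma Xd_in_Fdprime : ~~ (p %| d)%N -> [ffun i => (i == ord_max)%:R] \in Fd.
Proof.
move=> p_d; rewrite inE; apply/and3P; split.
- by apply/forallP => i; rewrite ffunE -(frobnE chLp) rmorph_nat.
- by rewrite ffunE eqxx oner_eq0.
- apply/forallP => i; apply/implyP => /andP[_ p_i]; rewrite ffunE.
  suff /negbTE -> : i != ord_max by [].
  by apply: contraNneq p_d => i_max; move: p_i; rewrite i_max.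
Qed.

Lemma avgFd1 : ~~ (p %| d)%N -> @avgFd L p q d (fun _ => 1) = 1.
Proof.
move=> p_d; rewrite /avgFd sumr_const mulVf // pnatr_eq0 -lt0n.
by apply/card_gt0P; exists [ffun i => (i == ord_max)%:R]; apply: Xd_in_Fdprime.
Qed.

Definition shift_coef (j : 'I_d.+1) (y : L) (a : {ffun 'I_d.+1 -> L}) :=
  [ffun i => a i + (if i == j then y else 0)].

Lemma shift_coefK j y : cancel (shift_coef j y) (shift_coef j (- y)).
Proof.
by move=> a; apply/ffunP => i; rewrite !ffunE; case: eqP; rewrite ?addr0 ?addrK.
Qed.

Lemma shift_coef_in_Fd (j : 'I_d.+1) y a :
  (j < d)%N -> (j == 0 :> nat) || ~~ (p %| j)%N -> y ^+ q = y ->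
  (shift_coef j y a \in Fd) = (a \in Fd).
Proof.
move=> j_lt_d j_free y_Fq.
have j_unrestricted : ((0 < j)%N && (p %| j)%N) = false.
  by rewrite lt0n; case/orP: j_free => [-> | /negbTE ->]; rewrite ?andbF.
rewrite !inE; congr [&& _, _ & _].
- apply: eq_forallb => i; rewrite !ffunE; case: ifP => _; last by rewrite addr0.
  by rewrite -(frobnE chLp) rmorphD /= !frobnE y_Fq (inj_eq (addIr y)).
- by rewrite !ffunE ifN ?addr0 // -val_eqE /= neq_ltn j_lt_d orbT.
- apply: eq_forallb => i; rewrite !ffunE; case: (eqVneq i j) => [-> | _]; last by rewrite addr0.
  by rewrite j_unrestricted.
Qed.

Variable psi : L -> algC.
Hypothesis psiD : forall x y : L, x ^+ p = x -> y ^+ p = y -> psi (x + y) = psi x * psi y.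
Hypothesis psi_neq0 : forall x : L, x ^+ p = x -> psi x != 0.

Lemma psi0 : psi 0 = 1.
Proof.
have zero_Fp : (0 : L) ^+ p = 0 by rewrite -(pFrobenius_autE chLp) rmorph0.
apply: (mulIf (psi_neq0 zero_Fp)); rewrite mul1r -psiD ?addr0 //.
Qed.

Lemma avgFd_trace_form_trivial (c : 'I_d.+1 -> L) : ~~ (p %| d)%N -> (forall i, c i = 0) ->
  avgFd p q (fun a => psi (trace_qp chLp m (\sum_i a i * c i))) = 1.
Proof.
move=> p_d c0; rewrite -(avgFd1 p_d); apply: eq_avgFd => a _ /=.
by rewrite big1 ?raddf0 ?psi0 // => i _; rewrite c0 mulr0.
Qed.

Lemma avgFd_trace_form_vanish (c : 'I_d.+1 -> L) (j : 'I_d.+1) n :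
  (0 < m)%N -> #|L| = (q ^ n)%N -> (exists x, x ^+ p = x /\ psi x != 1) ->
  (forall i, c i ^+ q = c i) ->
  (j < d)%N -> (j == 0 :> nat) || ~~ (p %| j)%N -> c j != 0 ->
  avgFd p q (fun a => psi (trace_qp chLp m (\sum_i a i * c i))) = 0.
Proof.
move=> m_gt0 cardL [t [t_Fp psi_t]] c_Fq j_lt_d j_free c_j.
have [x x_Fq tr_x] := trace_qp_onto chLp m_gt0 cardL (c_Fq j) c_j t_Fp.
have form_Fq a : a \in Fd -> (\sum_i a i * c i) ^+ q = \sum_i a i * c i.
  rewrite inE => /and3P[/forallP a_Fq _ _]; rewrite -frobnE rmorph_sum.
  by apply: eq_bigr => i _; rewrite rmorphM /= !frobnE c_Fq (eqP (a_Fq i)).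
rewrite /avgFd; set S := \sum_(a in _) _.
suff S_eq : S = psi t * S.
  have : (1 - psi t) * S = 0 by rewrite mulrBl mul1r -S_eq subrr.
  by move/eqP; rewrite mulf_eq0 subr_eq0 eq_sym (negbTE psi_t) => /eqP ->; rewrite mulr0.
rewrite {1}/S (reindex_inj (can_inj (shift_coefK j x))) /= mulr_sumr.
apply: eq_big => [a | a a_Fd]; first exact: shift_coef_in_Fd.
have -> : \sum_i shift_coef j x a i * c i = \sum_i a i * c i + x * c j.
  rewrite (bigD1 j) //= [in RHS](bigD1 j) //= ffunE eqxx mulrDl addrAC.
  congr (_ + _ + _); apply: eq_bigr => i /negbTE i_j.
  by rewrite ffunE i_j addr0.
rewrite shift_coef_in_Fd // in a_Fd.
by rewrite raddfD /= tr_x psiD ?trace_qp_Fp ?form_Fq // mulrC.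
Qed.

End CharacterSums.

Lemma indicator2_eq0 (T : finType) (V : zmodType) (S1 S2 : {set T}) (A1 A2 : V) x1 x2 :
  x1 \in S1 -> x2 \in S2 -> (S1 != S2 -> [disjoint S1 & S2]) ->
  [forall x, (if x \in S1 then A1 else 0) + (if x \in S2 then A2 else 0) == 0]
    = ((S1 == S2) && (A1 + A2 == 0)) || ((A1 == 0) && (A2 == 0)).
Proof.
move=> x1_S1 x2_S2 disj12; have [<- | neq12] /= := eqVneq S1 S2.
  apply/forallP/idP => [/(_ x1) | A12]; first by rewrite x1_S1 => ->.
  move=> x; case: ifP => _; last by rewrite addr0.
  by case/orP: A12 => [// | /andP[/eqP-> /eqP->]]; rewrite addr0.
have /pred0P disj := disj12 neq12.
have x1_S2 : x1 \notin S2 by apply/negP => x1_S2; have := disj x1; rewrite /= x1_S1 x1_S2.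
have x2_S1 : x2 \notin S1 by apply/negP => x2_S1; have := disj x2; rewrite /= x2_S1 x2_S2.
apply/forallP/andP => [S_eq0 | [/eqP A1_0 /eqP A2_0] x]; last first.
  by rewrite A1_0 A2_0 !if_same addr0.
have := S_eq0 x1; have := S_eq0 x2.
by rewrite x1_S1 (negbTE x1_S2) x2_S2 (negbTE x2_S1) addr0 add0r.
Qed.

Lemma lincomb_eq0_nondegenerate (R : idomainType) (e1 e2 x y : R) :
  e1 != 0 -> e2 != 0 ->
  ((e1 * x + e2 * y == 0) && (x * y != 0)) || ((x == 0) && (y == 0))
    = (e1 * x + e2 * y == 0) || ((x == 0) && (y == 0)).
Proof.
move=> e1_neq0 e2_neq0; have [-> | x_neq0] := eqVneq x 0.
  by rewrite mulr0 mul0r add0r eqxx andbF mulf_eq0 (negbTE e2_neq0) /= orbb.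
have [-> | y_neq0] := eqVneq y 0; last by rewrite mulf_neq0 // andbT.
by rewrite !mulr0 addr0 eqxx andbF mulf_eq0 (negbTE e1_neq0) (negbTE x_neq0).
Qed.

Section TwoOrbits.
Variables (L : finFieldType) (p : nat) (chLp : p \in [pchar L]) (m : nat).
Local Notation q := (p ^ m)%N.
Local Notation fq := (frobn chLp m).
Local Notation orb := (qorbit chLp m).
Variables (k1 k2 : nat) (E1 E2 : int) (a1 a2 : L).
Hypotheses (a1_Fqk : a1 ^+ (q ^ k1) = a1) (a2_Fqk : a2 ^+ (q ^ k2) = a2).

Definition orbit_weight (x : L) : L :=
  (if x \in orb a1 then (k1 %/ order fq a1)%:R *~ E1 else 0) +
  (if x \in orb a2 then (k2 %/ order fq a2)%:R *~ E2 else 0).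

Lemma rel_trace_orbit k a j : a ^+ (q ^ k) = a ->
  rel_trace chLp m k (a ^+ j) = (\sum_(x in orb a) x ^+ j) *+ (k %/ order fq a).
Proof.
move=> a_Fqk; rewrite -(sum_qorbit _ (fun x => x ^+ j)) // /rel_trace.
by under eq_bigr do rewrite frobnE expnM exprAC.
Qed.

Lemma psum_orbit_weight j :
  psum orbit_weight j = rel_trace chLp m k1 (a1 ^+ j) *~ E1 + rel_trace chLp m k2 (a2 ^+ j) *~ E2.
Proof.
have sum_if (O : {set L}) (A : L) :
    \sum_x (if x \in O then A else 0) * x ^+ j = A * \sum_(x in O) x ^+ j.
  by rewrite [in RHS]big_mkcond mulr_sumr; apply: eq_bigr => x _; case: ifP; rewrite ?mul0r ?mulr0.
rewrite /psum /orbit_weight; under eq_bigr do rewrite mulrDl.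
by rewrite big_split /= !sum_if !rel_trace_orbit // !mulrzAl !mulr_natl.
Qed.

Lemma orbit_weight_Fp x : orbit_weight x ^+ p = orbit_weight x.
Proof.
rewrite -(pFrobenius_autE chLp) rmorphD /=.
by congr (_ + _); case: ifP; rewrite ?rmorph0 ?rmorphMz ?rmorph_nat.
Qed.

Lemma psum_orbit_weight_Fq j : psum orbit_weight j ^+ q = psum orbit_weight j.
Proof.
rewrite psum_orbit_weight -(frobnE chLp) rmorphD /= !rmorphMz /= !frobnE.
by rewrite !rel_trace_Fq // exprAC ?a1_Fqk ?a2_Fqk.
Qed.

Lemma card_orbit_weight : (0 < k1)%N -> (0 < k2)%N ->
  (#|[set x | orbit_weight x != 0%R]| <= k1 + k2)%N.
Proof.
move=> k1_gt0 k2_gt0.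
have sub : [set x | orbit_weight x != 0] \subset orb a1 :|: orb a2.
  apply/subsetP => x; rewrite inE in_setU /orbit_weight.
  by case: (x \in orb a1); case: (x \in orb a2); rewrite ?addr0 ?eqxx.
apply: leq_trans (subset_leq_card sub) _; apply: leq_trans (leq_card_setU _ _) _.
rewrite !card_qorbit leq_add // dvdn_leq //; exact: order_qorbit_dvdn.
Qed.

Lemma abs_trace_polyOf d (a : {ffun 'I_d.+1 -> L}) : (forall i, a i ^+ q = a i) ->
  abs_trace p m k1 (polyOf a).[a1] *~ E1 + abs_trace p m k2 (polyOf a).[a2] *~ E2
    = trace_qp chLp m (\sum_i a i * psum orbit_weight i).
Proof.
move=> a_Fq; rewrite !(abs_trace_rel_trace chLp) -!raddfMz -raddfD /=; congr trace_qp.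
rewrite /polyOf !horner_poly !raddfMz !raddf_sum !mulrz_suml -big_split /=.
apply: eq_bigr => i _; rewrite inord_val !rel_traceZ // psum_orbit_weight.
by rewrite mulrDr !mulrzAr.
Qed.

Hypotheses (E1_neq0 : E1%:~R != 0 :> L) (E2_neq0 : E2%:~R != 0 :> L).

Lemma orbit_weight_eq0 : (0 < k1)%N -> (0 < k2)%N ->
  [forall x, orbit_weight x == 0] =
    ((orb a1 == orb a2)
       && (p%:Z %| (E1 * k1%:Z + E2 * k2%:Z) %/ (order fq a1)%:Z)%Z
       && ~~ (p %| (k1 * k2) %/ (order fq a1 * order fq a2))%N)
    || ((p %| k1 %/ order fq a1)%N && (p %| k2 %/ order fq a2)%N).
Proof.
move=> k1_gt0 k2_gt0.
rewrite (indicator2_eq0 _ _ (qorbit_id chLp m a1) (qorbit_id chLp m a2)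
  (@qorbit_disjoint _ _ chLp m a1 a2)).
have [K1 ->] := dvdnP (order_qorbit_dvdn chLp a1_Fqk).
have [K2 ->] := dvdnP (order_qorbit_dvdn chLp a2_Fqk).
rewrite !mulnK ?order_gt0 // !(dvdn_pcharf chLp) -[_ *~ E1]mulrzl -[_ *~ E2]mulrzl.
rewrite !mulf_eq0 (negbTE E1_neq0) (negbTE E2_neq0) /=.
have [eq12 | _] /= := eqVneq (orb a1) (orb a2); last by [].
have -> : order fq a2 = order fq a1 by rewrite -!card_qorbit eq12.
rewrite mulnACA mulnK ?muln_gt0 ?order_gt0 // natrM.
rewrite !PoszM !mulrA -mulrDl mulzK ?eqz_nat -?lt0n ?order_gt0 // (dvdz_pcharf chLp).
by rewrite rmorphD !rmorphM /= -!pmulrn lincomb_eq0_nondegenerate.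
Qed.

Variables (d : nat) (psi : L -> algC).
Hypothesis psiD : forall x y : L, x ^+ p = x -> y ^+ p = y -> psi (x + y) = psi x * psi y.
Hypothesis psi_neq0 : forall x : L, x ^+ p = x -> psi x != 0.
Hypothesis psi_nontrivial : exists x : L, x ^+ p = x /\ psi x != 1.

Lemma avgFd_orbit_weight n : (0 < m)%N -> #|L| = (q ^ n)%N ->
  (0 < k1)%N -> (0 < k2)%N -> (k1 + k2 < d)%N -> ~~ (p %| d)%N ->
  @avgFd L p q d (fun a =>
      psi (abs_trace p m k1 (polyOf a).[a1] *~ E1 + abs_trace p m k2 (polyOf a).[a2] *~ E2))
    = if [forall x, orbit_weight x == 0] then 1 else 0.
Proof.
move=> m_gt0 cardL k1_gt0 k2_gt0 k_lt_d p_d.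
pose c (i : 'I_d.+1) := psum orbit_weight i.
rewrite (eq_avgFd (phi' := fun a => psi (trace_qp chLp m (\sum_i a i * c i)))); last first.
  move=> a; rewrite inE => /and3P[/forallP a_Fq _ _].
  by rewrite abs_trace_polyOf // => i; apply/eqP.
case: ifP => [/forallP W0 | /negbT W_neq0].
  apply: avgFd_trace_form_trivial => // i; rewrite /c /psum big1 // => x _.
  by rewrite (eqP (W0 x)) mul0r.
have [j [le_j j_free psum_j]] :=
  exists_psum_neq0 chLp orbit_weight_Fp (card_orbit_weight k1_gt0 k2_gt0) W_neq0.
have j_le_d : (j < d.+1)%N by rewrite ltnS ltnW // (leq_ltn_trans le_j k_lt_d).
apply: (avgFd_trace_form_vanish chLp psiD (j := inord j) m_gt0 cardL psi_nontrivial)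
  => [i | | |]; rewrite /c ?inordK //; first exact: psum_orbit_weight_Fq.
exact: leq_ltn_trans le_j k_lt_d.
Qed.

End TwoOrbits.

Unset Implicit Arguments. Set Strict Implicit. Set Printing Implicit Defensive.

Theorem lemma7p1 (p m d N : nat) (L : finFieldType)
  (hp : prime p) (hodd : odd p) (hm : (0 < m)%N)
  (hL : #|L| = (p ^ N)%N)
  (hd : (0 < d)%N) (hpd : ~~ (p %| d)%N)
  (psi : L -> algC)
  (hpsi_add : forall x y : L, x ^+ p = x -> y ^+ p = y -> psi (x + y) = psi x * psi y)
  (hpsi_nz : forall x : L, x ^+ p = x -> psi x != 0)
  (hpsi_nt : exists x : L, x ^+ p = x /\ psi x != 1)
  (h1 h2 e1 e2 : int)
  (hh : ~~ (p%:Z %| h1 * h2)%Z)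
  (he1 : e1 = 1 \/ e1 = -1) (he2 : e2 = 1 \/ e2 = -1)
  (k1 k2 : nat) (hk1 : (0 < k1)%N) (hk2 : (0 < k2)%N) (hk : (k1 + k2 < d)%N)
  (hN1 : (m * k1 %| N)%N) (hN2 : (m * k2 %| N)%N)
  (a1 a2 : L)
  (ha1 : a1 ^+ ((p ^ m) ^ k1) = a1) (ha2 : a2 ^+ ((p ^ m) ^ k2) = a2)
  (g1 g2 : {poly L})
  (hg1 : is_minpoly_Fq (p ^ m) a1 g1) (hg2 : is_minpoly_Fq (p ^ m) a2 g2) :
  let q := (p ^ m)%N in
  let u1 := (size g1).-1 in
  let u2 := (size g2).-1 in
  @avgFd L p q d (fun a =>
     psi (abs_trace p m k1 (polyOf a).[a1] *~ (e1 * h1)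
        + abs_trace p m k2 (polyOf a).[a2] *~ (e2 * h2)))
  = if ((g1 == g2)
         && (p%:Z %| (e1 * h1 * k1%:Z + e2 * h2 * k2%:Z) %/ u1%:Z)%Z
         && ~~ (p %| (k1 * k2) %/ (u1 * u2))%N)
       || ((p %| k1 %/ u1)%N && (p %| k2 %/ u2)%N)
    then 1 else 0.
Proof.
move=> q u1 u2.
have chLp : p \in [pchar L] := card_finPcharP hL hp.
have [n cardL] : exists n, #|L| = (q ^ n)%N.
  have /dvdnP[n def_N] : (m %| N)%N := dvdn_trans (dvdn_mulr k1 (dvdnn m)) hN1.
  by exists n; rewrite hL def_N mulnC expnM.
have E_neq0 (e h : int) : e = 1 \/ e = -1 -> ~~ (p%:Z %| h)%Z -> (e * h)%:~R != 0 :> L.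
  move=> he; rewrite (dvdz_pcharf chLp) rmorphM mulf_eq0 negb_or => ->; rewrite andbT.
  by case: he => ->; rewrite ?rmorphN rmorph1 ?oppr_eq0 oner_eq0.
have E1_neq0 := E_neq0 _ _ he1 (contra (dvdz_mulr h2) hh).
have E2_neq0 := E_neq0 _ _ he2 (contra (@dvdz_mull _ h1 h2) hh).
rewrite /u1 /u2 (minpoly_orbit_poly chLp hg1) (minpoly_orbit_poly chLp hg2).
rewrite !size_orbit_poly orbit_poly_eq /=.
rewrite -(orbit_weight_eq0 chLp ha1 ha2 E1_neq0 E2_neq0 hk1 hk2).
exact: (avgFd_orbit_weight chLp _ _ ha1 ha2 hpsi_add hpsi_nz hpsi_nt hm cardL hk1 hk2 hk hpd).
Qed.
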